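(* Let $F = \{f_1,\dots,f_N\}$ with $f_i(z) = a_i z + b_i$, $a_i,b_i\in\mathbb{Z}$. Let $z \in \mathbb{Z}$, let $\alpha, \beta$ be reduced regular expressions, and let $\ell$ be a finite (possibly empty) sequence of literals $i$ each with $a_i > 0$. Then: (1) $I(z, \ell \alpha^* \beta) \iff I(z, \ell \beta) \lor I(P_\ell(z), \alpha)$; (2) $I(z, \ell \alpha^* ) \iff I(z, \ell) \lor I(P_\ell(z), \alpha)$; (3) $I(z, \alpha^* \beta) \iff I(z, \alpha) \lor I(z, \beta)$; (4) $I(z, \alpha^* ) \iff I(z,\alpha)$.
   Context: Regular expressions are over the alphabet $\{1,\dots,N\}$ (literals), built with concatenation (written multiplicatively), union, Kleene star, $\epsilon$ (empty string) and $\emptyset$ (empty language); $L(E)$ is the language of $E$. For a word $s = e_1 e_2 \cdots e_K$ put $P_s = f_{e_K} \circ \dots \circ f_{e_1}$ (with $P_\epsilon$ the identity). A regular expression is reduced if it contains no $\emptyset$ symbol, no union operation, and every literal $i$ occurring in it satisfies $a_i > 0$. For $z \in \mathbb{Z}$ and a reduced expression $E$, $I(z,E)$ is the statement: there exists $s \in L(E)$ with $P_s(z) > z$. *)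

From Stdlib Require Import ZArith List.
Import ListNotations.
Open Scope Z_scope.

(* Regular expressions over literals (natural numbers; the alphabet {1..N}
   is imposed separately by [over_alphabet]). *)
Inductive regex : Type :=
| RLit : nat -> regex
| REps : regex
| REmpty : regex
| RCat : regex -> regex -> regex
| RUnion : regex -> regex -> regex
| RStar : regex -> regex.

Inductive in_lang : regex -> list nat -> Prop :=
| in_lit : forall i, in_lang (RLit i) [i]
| in_eps : in_lang REps []
| in_cat : forall E1 E2 s1 s2, in_lang E1 s1 -> in_lang E2 s2 ->
    in_lang (RCat E1 E2) (s1 ++ s2)
| in_union_l : forall E1 E2 s, in_lang E1 s -> in_lang (RUnion E1 E2) s
| in_union_r : forall E1 E2 s, in_lang E2 s -> in_lang (RUnion E1 E2) s
| in_star_nil : forall E, in_lang (RStar E) []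
| in_star_cons : forall E s1 s2, in_lang E s1 -> in_lang (RStar E) s2 ->
    in_lang (RStar E) (s1 ++ s2).

Fixpoint over_alphabet (N : nat) (E : regex) : Prop :=
  match E with
  | RLit i => (1 <= i <= N)%nat
  | REps | REmpty => True
  | RCat E1 E2 | RUnion E1 E2 => over_alphabet N E1 /\ over_alphabet N E2
  | RStar E1 => over_alphabet N E1
  end.

(* f_i(z) = a i * z + b i;  P_s = f_{e_K} o ... o f_{e_1}. *)
Definition P (a b : nat -> Z) (s : list nat) (z : Z) : Z :=
  fold_left (fun x i => a i * x + b i) s z.

Fixpoint reduced (a : nat -> Z) (E : regex) : Prop :=
  match E with
  | RLit i => 0 < a i
  | REps => True
  | REmpty => False
  | RCat E1 E2 => reduced a E1 /\ reduced a E2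
  | RUnion _ _ => False
  | RStar E1 => reduced a E1
  end.

Definition I (a b : nat -> Z) (z : Z) (E : regex) : Prop :=
  exists s, in_lang E s /\ P a b s z > z.

Fixpoint word_re (l : list nat) : regex :=
  match l with
  | [] => REps
  | i :: l' => RCat (RLit i) (word_re l')
  end.

From Pilot Require Import Defs.
From Stdlib Require Import ZArith List Lia.
Import ListNotations.
Open Scope Z_scope.

(* For a word s all of whose letters have a_i > 0, the affine map
   P_s is increasing and even expanding: x <= y implies
   P_s(y) - P_s(x) >= y - x.  Every word of a reduced expression is of this
   kind.  Two consequences drive the theorem:
   - if a word of alpha^* lifts a point x <= w above w, then the first of its
     alpha-factors that crosses w already lifts w itself (so I(w, alpha));
   - conversely, if a word of alpha lifts w, iterating it lifts w arbitrarily
     high, and an expanding suffix from beta preserves that height gain.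
   We work with the relation [reaches E w z] ("some word of L(E) sends w above
   z"), of which I(z, E) is the diagonal case w = z. *)

Section Reachability.

Variables a b : nat -> Z.

Local Notation P := (P a b).

Definition positive_word (s : list nat) : Prop := Forall (fun i => 0 < a i) s.

Definition reaches (E : regex) (w z : Z) : Prop :=
  exists s, in_lang E s /\ P s w > z.

Lemma I_reaches (z : Z) (E : regex) : I a b z E <-> reaches E z z.
Proof. reflexivity. Qed.

Lemma reduced_positive (E : regex) (s : list nat) :
  reduced a E -> in_lang E s -> positive_word s.
Proof.
  unfold positive_word; intros HR H; induction H; simpl in *; try tauto;
    try (apply Forall_app; tauto); repeat constructor; auto.
Qed.

Lemma reduced_nonempty (E : regex) : reduced a E -> exists t, in_lang E t.
Proof.
  induction E; simpl; intros HR; try tauto; try (eexists; constructor; fail).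
  destruct (IHE1 (proj1 HR)) as [t1 ?], (IHE2 (proj2 HR)) as [t2 ?].
  eexists; constructor; eauto.
Qed.

Lemma P_app (s1 s2 : list nat) (x : Z) : P (s1 ++ s2) x = P s2 (P s1 x).
Proof. unfold Defs.P; now rewrite fold_left_app. Qed.

Lemma P_expanding (s : list nat) (x y : Z) :
  positive_word s -> x <= y -> P s x + (y - x) <= P s y.
Proof.
  intros Hs; revert x y; induction Hs as [|i s Hi Hs IH]; intros x y Hxy;
    unfold Defs.P in *; simpl.
  - lia.
  - specialize (IH (a i * x + b i) (a i * y + b i) ltac:(nia)); nia.
Qed.

Lemma P_monotone (s : list nat) (x y : Z) :
  positive_word s -> x <= y -> P s x <= P s y.
Proof. intros Hs Hxy; pose proof (P_expanding s x y Hs Hxy); lia. Qed.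

Lemma word_re_lang (l s : list nat) : in_lang (word_re l) s <-> s = l.
Proof.
  split.
  - revert s; induction l as [|i l IH]; simpl; intros s H; inversion H; subst; auto.
    match goal with Hh : in_lang (RLit _) _ |- _ => inversion Hh; subst end.
    simpl; f_equal; apply IH; assumption.
  - intros ->; induction l as [|i l IH]; simpl; [constructor|].
    change (i :: l) with ([i] ++ l); constructor; [constructor | exact IH].
Qed.

Lemma reaches_cat (E1 E2 : regex) (w z : Z) :
  reaches (RCat E1 E2) w z <-> exists s1, in_lang E1 s1 /\ reaches E2 (P s1 w) z.
Proof.
  split.
  - intros [s [Hs HP]]; inversion Hs as [| |? ? s1 s2 Hs1 Hs2| | | |]; subst.
    rewrite P_app in HP; exists s1; split; [exact Hs1 | exists s2; split; assumption].
  - intros [s1 [Hs1 [s2 [Hs2 HP]]]].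
    exists (s1 ++ s2); split; [now constructor | now rewrite P_app].
Qed.

Lemma reaches_word_cat (l : list nat) (E : regex) (w z : Z) :
  reaches (RCat (word_re l) E) w z <-> reaches E (P l w) z.
Proof.
  rewrite reaches_cat; split.
  - intros [s1 [Hs1 HE]]; apply word_re_lang in Hs1; subst; exact HE.
  - intros HE; exists l; split; [now apply word_re_lang | exact HE].
Qed.

Lemma reaches_eps (w z : Z) : reaches REps w z <-> w > z.
Proof.
  split.
  - intros [s [Hs HP]]; inversion Hs; subst; exact HP.
  - intros H; exists []; split; [constructor | exact H].
Qed.

Lemma reaches_cat_eps (E : regex) (w z : Z) :
  reaches (RCat E REps) w z <-> reaches E w z.
Proof.
  rewrite reaches_cat; split.
  - intros [s [Hs Heps]]; apply reaches_eps in Heps; now exists s.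
  - intros [s [Hs HP]]; exists s; split; [exact Hs | now apply reaches_eps].
Qed.

Section Star.

Variable alpha : regex.
Hypothesis Hralpha : reduced a alpha.

(* If a word of alpha^* lifts some x <= w above w, then some single
   alpha-factor (the first one crossing w) lifts w itself above w. *)
Lemma star_crossing (s : list nat) (x w : Z) :
  in_lang (RStar alpha) s -> x <= w -> P s x > w -> I a b w alpha.
Proof.
  intros H; remember (RStar alpha) as E; revert x.
  induction H; intros x Hx HP; try discriminate.
  - unfold Defs.P in HP; simpl in HP; lia.
  - injection HeqE as ->; rewrite P_app in HP.
    destruct (Z_le_gt_dec (P s1 x) w) as [Hle | Hgt].
    + exact (IHin_lang2 eq_refl _ Hle HP).
    + exists s1; split; [exact H|].
      pose proof (P_monotone s1 x w (reduced_positive _ _ Hralpha H) Hx); lia.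
Qed.

(* If a word of alpha lifts w, powers of it lift w by any amount. *)
Lemma star_unbounded (w : Z) (k : nat) :
  I a b w alpha -> exists u, in_lang (RStar alpha) u /\ P u w >= w + Z.of_nat k.
Proof.
  intros [s [Hs HP]]; induction k as [|k [u [Hu Hw]]].
  - exists []; split; [constructor | unfold Defs.P; simpl; lia].
  - exists (s ++ u); split; [now constructor|]; rewrite P_app.
    pose proof (P_expanding u w (P s w) (reduced_positive (RStar alpha) u Hralpha Hu)
                  ltac:(lia)); lia.
Qed.

Lemma reaches_star_cat (beta : regex) (w z : Z) :
  reduced a beta ->
  reaches (RCat (RStar alpha) beta) w z <-> reaches beta w z \/ I a b w alpha.
Proof.
  intros Hrbeta; rewrite reaches_cat; split.
  - intros [u [Hu [t [Ht HP]]]].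
    destruct (Z_le_gt_dec (P u w) w) as [Hle | Hgt].
    + left; exists t; split; [exact Ht|].
      pose proof (P_monotone t _ _ (reduced_positive _ _ Hrbeta Ht) Hle); lia.
    + right; exact (star_crossing u w w Hu (Z.le_refl w) Hgt).
  - intros [Hbeta | Halpha].
    + exists []; split; [constructor | exact Hbeta].
    + destruct (reduced_nonempty beta Hrbeta) as [t Ht].
      destruct (star_unbounded w (Z.to_nat (z - P t w) + 1) Halpha) as [u [Hu Hw]].
      exists u; split; [exact Hu|]; exists t; split; [exact Ht|].
      pose proof (P_expanding t w (P u w) (reduced_positive _ _ Hrbeta Ht) ltac:(lia));
        lia.
Qed.

Lemma I_word_star_cat (l : list nat) (beta : regex) (z : Z) :
  reduced a beta ->
  I a b z (RCat (word_re l) (RCat (RStar alpha) beta))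
    <-> I a b z (RCat (word_re l) beta) \/ I a b (P l z) alpha.
Proof.
  intros Hrbeta; rewrite !I_reaches, !reaches_word_cat.
  exact (reaches_star_cat beta _ z Hrbeta).
Qed.

Lemma I_word_star (l : list nat) (z : Z) :
  I a b z (RCat (word_re l) (RStar alpha))
    <-> I a b z (word_re l) \/ I a b (P l z) alpha.
Proof.
  rewrite !I_reaches, reaches_word_cat, <- reaches_cat_eps, reaches_star_cat by exact Logic.I.
  rewrite <- (reaches_cat_eps (word_re l)), reaches_word_cat; reflexivity.
Qed.

End Star.

End Reachability.

Theorem mainTheorem6 (N : nat) (a b : nat -> Z) (z : Z)
  (alpha beta : regex) (l : list nat)
  (Ha : over_alphabet N alpha) (Hb : over_alphabet N beta)
  (Hra : reduced a alpha) (Hrb : reduced a beta)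
  (Hl : Forall (fun i => (1 <= i <= N)%nat /\ 0 < a i) l) :
  (I a b z (RCat (word_re l) (RCat (RStar alpha) beta))
     <-> I a b z (RCat (word_re l) beta) \/ I a b (P a b l z) alpha) /\
  (I a b z (RCat (word_re l) (RStar alpha))
     <-> I a b z (word_re l) \/ I a b (P a b l z) alpha) /\
  (I a b z (RCat (RStar alpha) beta) <-> I a b z alpha \/ I a b z beta) /\
  (I a b z (RStar alpha) <-> I a b z alpha).
Proof.
  assert (eps_prefix : forall E, I a b z (RCat REps E) <-> I a b z E)
    by (intros E; exact (reaches_word_cat a b [] E z z)).
  split; [|split; [|split]].
  - exact (I_word_star_cat a b alpha Hra l beta z Hrb).
  - exact (I_word_star a b alpha Hra l z).
  - pose proof (I_word_star_cat a b alpha Hra [] beta z Hrb) as H; simpl in H.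
    rewrite !eps_prefix in H; tauto.
  - pose proof (I_word_star a b alpha Hra [] z) as H; simpl in H.
    rewrite eps_prefix in H.
    assert (~ I a b z REps) by (intros Heps; apply reaches_eps in Heps; lia).
    tauto.
Qed.
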